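(* Let $N\ge1$, $\Gamma\in\{\Gamma_0(N),\Gamma_1(N)\}$, $k\in\mathbb{Z}$, $m\in\mathbb{Z}_{>0}$, and let $\varphi$ be a meromorphic Jacobi form of weight $k$ and index $m$ w.r.t. $\Gamma\ltimes\mathbb{Z}^2$ with (at most) double poles at $z=z_s=\alpha\tau+\beta$ for $s=(\alpha,\beta)\in S(\varphi)\subset\mathbb{Q}^2$. Then for all $\gamma=\begin{pmatrix}a&b\\c&d\end{pmatrix}\in\Gamma$: $E_s(\frac{a\tau+b}{c\tau+d})=(c\tau+d)^{k-2}E_{s\gamma}(\tau)$ and $D_s(\frac{a\tau+b}{c\tau+d})=(c\tau+d)^{k-1}D_{s\gamma}(\tau)$, where $s\gamma=(a\alpha+c\beta,b\alpha+d\beta)$.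
   Context: $\mathbf{e}(t)=e^{2\pi it}$. $\Gamma_0(N)$: $c\equiv0\bmod N$; $\Gamma_1(N)$: also $a\equiv d\equiv1\bmod N$. A meromorphic Jacobi form of weight $k$, index $m$ for $\Gamma\ltimes\mathbb{Z}^2$: meromorphic in $z$, weakly holomorphic in $\tau$, with $\varphi(\frac{a\tau+b}{c\tau+d},\frac z{c\tau+d})=(c\tau+d)^k\mathbf{e}(\frac{mcz^2}{c\tau+d})\varphi(\tau,z)$ for $\gamma\in\Gamma$ and $\varphi(\tau,z+\lambda\tau+\mu)=\mathbf{e}(-m(\lambda^2\tau+2\lambda z))\varphi(\tau,z)$ for $(\lambda,\mu)\in\mathbb{Z}^2$. $D_s,E_s$ are defined by $\mathbf{e}(m\alpha z_s)\varphi(\tau,z_s+\varepsilon)=\frac{E_s(\tau)}{(2\pi i\varepsilon)^2}+\frac{D_s(\tau)-2m\alpha E_s(\tau)}{2\pi i\varepsilon}+O(1)$ as $\varepsilon\to0$. *)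

From HB Require Import structures.
From mathcomp Require Import all_boot all_order all_algebra.
From mathcomp Require Import all_classical all_reals all_analysis.
From mathcomp Require Import complex.
Set Implicit Arguments. Unset Strict Implicit. Unset Printing Implicit Defensive.
Import Order.TTheory GRing.Theory Num.Theory.
Local Open Scope ring_scope.
Local Open Scope complex_scope.

Section Defs.
Variable R : realType.
Local Notation C := R[i].

(* e(t) = exp(2 pi i t) for complex t = x + i y : exp(-2 pi y) (cos 2 pi x + i sin 2 pi x) *)
Definition ee (t : C) : C :=
  (expR (- (2 * pi * complex.Im t)))%:C *
  ((cos (2 * pi * complex.Re t)) +i* (sin (2 * pi * complex.Re t))).

Definition twopii : C := (2 * pi)%:C * 'i.

Definition upper (t : C) : Prop := 0 < complex.Im t.

Definition cdiff (f : C -> C) (z : C) : Prop :=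
  exists l : C, forall e : R, 0 < e -> exists d : R, 0 < d /\
    forall h : C, h != 0 -> `|h| < d%:C -> `|(f (z + h) - f z) / h - l| < e%:C.

Definition zs (s : rat * rat) (tau : C) : C := ratr s.1 * tau + ratr s.2.

Definition poles (S : set (rat * rat)) (tau : C) (z : C) : Prop :=
  exists2 s, S s & z = zs s tau.

Inductive level := Gamma0 | Gamma1.

Definition inGamma (G : level) (N : nat) (a b c d : int) : Prop :=
  a * d - b * c = 1 /\ (N%:Z %| c)%Z /\
  (if G is Gamma1 then (a == 1 %[mod N%:Z])%Z /\ (d == 1 %[mod N%:Z])%Z else True).

Definition moebius (a b c d : int) (tau : C) : C :=
  (a%:~R * tau + b%:~R) / (c%:~R * tau + d%:~R).

Definition sact (s : rat * rat) (a b c d : int) : rat * rat :=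
  (a%:~R * s.1 + c%:~R * s.2, b%:~R * s.1 + d%:~R * s.2).

(* meromorphic Jacobi form of weight k, index m for Gamma |x Z^2, whose
   poles (in z) lie in { z_s(tau) | s in S }.  phi is a total function; its
   values at poles are irrelevant (laws only required off the poles). *)
Definition meromorphic_jacobi_form (G : level) (N : nat) (k : int) (m : nat)
    (S : set (rat * rat)) (phi : C -> C -> C) : Prop :=
  (forall tau, upper tau -> forall z, exists r : R, 0 < r /\
      forall w, poles S tau w -> w != z -> r%:C <= `|w - z|) /\
  (forall tau, upper tau -> forall z, ~ poles S tau z -> cdiff (phi tau) z) /\
  (forall tau, upper tau -> forall z, ~ poles S tau z ->
      cdiff (fun t => phi t z) tau) /\
  (forall a b c d, inGamma G N a b c d -> forall tau z, upper tau ->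
      ~ poles S tau z ->
      ~ poles S (moebius a b c d tau) (z / (c%:~R * tau + d%:~R)) ->
      phi (moebius a b c d tau) (z / (c%:~R * tau + d%:~R)) =
      (c%:~R * tau + d%:~R) ^ k *
        ee (m%:R * c%:~R * z ^+ 2 / (c%:~R * tau + d%:~R)) * phi tau z) /\
  (forall (lam mu : int) tau z, upper tau -> ~ poles S tau z ->
      ~ poles S tau (z + lam%:~R * tau + mu%:~R) ->
      phi tau (z + lam%:~R * tau + mu%:~R) =
      ee (- (m%:R * (lam%:~R ^+ 2 * tau + 2 * lam%:~R * z))) * phi tau z).

(* E_s(tau), D_s(tau) are the Laurent coefficients at z_s:
   e(m alpha z_s) phi(tau, z_s + eps)
     = E/(2 pi i eps)^2 + (D - 2 m alpha E)/(2 pi i eps) + O(1)  (eps -> 0). *)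
Definition laurent_ED (m : nat) (phi : C -> C -> C) (s : rat * rat) (tau : C)
    (E D : C) : Prop :=
  exists r : R, 0 < r /\ exists M : R, forall eps : C, eps != 0 -> `|eps| < r%:C ->
    `|ee (m%:R * ratr s.1 * zs s tau) * phi tau (zs s tau + eps)
           - E / (twopii * eps) ^+ 2
           - (D - 2 * m%:R * ratr s.1 * E) / (twopii * eps)| <= M%:C.

End Defs.

(* Substituting z = z_{s gamma}(tau) + (c tau + d) eps in the modular law and using
   z_s(gamma tau) = z_{s gamma}(tau) / (c tau + d) and
   alpha = alpha' (c tau + d) - c z_{s gamma}(tau), where alpha' is the first coordinate
   of s gamma, gives
     e(m alpha z_s) phi(gamma tau, z_s + eps)
       = (c tau + d)^k e(w(eps)) e(m alpha' z_{s gamma}) phi(tau, z_{s gamma} + (c tau + d) eps)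
   with w(eps) = 2 m c z_{s gamma} eps + m c (c tau + d) eps^2.  As e(w) = 1 + 2 pi i w + O(eps^2),
   the right-hand side has an explicit polar part in terms of E_{s gamma}(tau), D_{s gamma}(tau),
   and the polar part of a function is unique. *)

From HB Require Import structures.
From mathcomp Require Import all_boot all_order all_algebra.
From mathcomp Require Import all_classical all_reals all_analysis.
From mathcomp Require Import complex lra ring.
Import Order.TTheory GRing.Theory Num.Theory.
Local Open Scope ring_scope.

Section RealTaylor.
Context {R : realType}.

Lemma mvt_pow_bound (f df : R -> R) (L K : R) (n : nat) :
  (forall x, is_derive x (1 : R) f (df x)) -> f 0 = 0 -> 0 <= K ->
  (forall y, `|y| <= L -> `|df y| <= K * `|y| ^+ n) ->
  forall x, `|x| <= L -> `|f x| <= K * `|x| ^+ n.+1.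
Proof.
move=> f' f0 K0 df_le x xL.
have dfx_le c : `|c| <= `|x| -> `|df c * x| <= K * `|x| ^+ n.+1.
  move=> cx; rewrite normrM exprS (mulrC `|x|) mulrA ler_wpM2r //.
  apply: le_trans (df_le c (le_trans cx xL)) _.
  by rewrite ler_wpM2l // lerXn2r // ?nnegrE.
have [x0 | x0] := leP 0 x.
- have [|c /andP[c0 cx] fxE] := MVT_segment x0 (fun z _ => f' z).
    by apply: derivable_within_continuous => z _; exact: ex_derive.
  rewrite f0 !subr0 in fxE; rewrite fxE; apply: dfx_le.
  by rewrite !ger0_norm // (le_trans c0 cx).
- have [|c /andP[xc c0] fxE] := MVT_segment (ltW x0) (fun z _ => f' z).
    by apply: derivable_within_continuous => z _; exact: ex_derive.
  rewrite f0 sub0r add0r in fxE.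
  rewrite -[f x]opprK fxE mulrN opprK; apply: dfx_le.
  by rewrite !ler0_norm ?lerN2 // ltW.
Qed.

Lemma norm_sin_le (y : R) : `|sin y| <= `|y|.
Proof.
rewrite -[`|y|]mul1r -[`|y|]expr1.
apply: (@mvt_pow_bound sin cos `|y|) => //; first exact: sin0.
by move=> z _; rewrite expr0 mulr1 cos_max.
Qed.

Lemma norm_cos_sub1_le (y : R) : `|cos y - 1| <= y ^+ 2.
Proof.
rewrite -real_normK ?num_real // -[`|y| ^+ 2]mul1r.
apply: (@mvt_pow_bound (fun x => cos x - 1) (fun x => - sin x) `|y|) => //.
- by move=> x; rewrite -[- sin x]subr0; apply: is_deriveB.
- by rewrite cos0 subrr.
- by move=> z _; rewrite normrN mul1r expr1 norm_sin_le.
Qed.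

Lemma norm_sin_sub_le (L y : R) : `|y| <= L -> `|sin y - y| <= L * y ^+ 2.
Proof.
move=> yL; have L0 : 0 <= L := le_trans (normr_ge0 y) yL.
apply: le_trans (_ : 1 * `|y| ^+ 3 <= _).
  apply: (@mvt_pow_bound (fun x => sin x - x) (fun x => cos x - 1) `|y|) => //.
    by rewrite sin0 subrr.
  by move=> z _; rewrite mul1r real_normK ?num_real // norm_cos_sub1_le.
by rewrite mul1r exprS real_normK ?num_real // ler_wpM2r // sqr_ge0.
Qed.

Lemma norm_expR_sub1_le (L x : R) : `|x| <= L -> `|expR x - 1| <= expR L * `|x|.
Proof.
move=> xL; rewrite -[`|x|]expr1.
apply: (@mvt_pow_bound (fun x => expR x - 1) expR L) => //.
- by move=> z; rewrite -[expR z]subr0; apply: is_deriveB.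
- by rewrite expR0 subrr.
- by move=> y yL; rewrite expr0 mulr1 ger0_norm ?expR_ge0 // ler_expR (le_trans (ler_norm y)).
Qed.

Lemma norm_expR_sub1_sub_le (L x : R) : `|x| <= L -> `|expR x - 1 - x| <= expR L * x ^+ 2.
Proof.
move=> xL; rewrite -real_normK ?num_real //.
apply: (@mvt_pow_bound (fun z => expR z - 1 - z) (fun z => expR z - 1) L) => //.
- by move=> z; rewrite -(subr0 (expR z)); apply: is_deriveB.
- by rewrite expR0 !subrr.
- by move=> y yL; rewrite expr1 norm_expR_sub1_le.
Qed.

Lemma expR_cos_sin_quadratic_bound (L : R) : 0 <= L -> exists2 K : R, 0 <= K &
  forall X Y : R, `|X| <= L -> `|Y| <= L ->
  `|expR X * cos Y - 1 - X| + `|expR X * sin Y - Y| <= K * (X ^+ 2 + Y ^+ 2).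
Proof.
move=> L0; have eL0 := expR_ge0 L.
exists (2 * expR L + 1 + 2 * L); first by rewrite !addr_ge0 ?mulr_ge0.
move=> X Y XL YL.
have -> : expR X * cos Y - 1 - X = (expR X - 1 - X) * cos Y + (1 + X) * (cos Y - 1) by ring.
have -> : expR X * sin Y - Y = (expR X - 1) * sin Y + (sin Y - Y) by ring.
have t1 : `|(expR X - 1 - X) * cos Y| <= expR L * X ^+ 2.
  rewrite normrM; apply: le_trans (ler_piMr _ (cos_max Y)) _ => //.
  exact: norm_expR_sub1_sub_le.
have t2 : `|(1 + X) * (cos Y - 1)| <= (1 + L) * Y ^+ 2.
  rewrite normrM; apply: ler_pM => //; last exact: norm_cos_sub1_le.
  by apply: le_trans (ler_normD _ _) _; rewrite normr1 lerD2l.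
have t3 : `|(expR X - 1) * sin Y| <= expR L * (`|X| * `|Y|).
  rewrite normrM mulrA; apply: ler_pM => //; last exact: norm_sin_le.
  exact: norm_expR_sub1_le.
have t4 := @norm_sin_sub_le L Y YL.
have XY : `|X| * `|Y| <= X ^+ 2 + Y ^+ 2.
  rewrite -[X ^+ 2]real_normK ?num_real // -[Y ^+ 2]real_normK ?num_real //.
  have := sqr_ge0 (`|X| - `|Y|); rewrite sqrrB mulr2n.
  by have := mulr_ge0 (normr_ge0 X) (normr_ge0 Y); lra.
apply: le_trans (lerD (ler_normD _ _) (ler_normD _ _)) _.
have := ler_wpM2l eL0 XY; have := sqr_ge0 X; have := sqr_ge0 Y.
have := mulr_ge0 L0 (sqr_ge0 X); have := mulr_ge0 eL0 (sqr_ge0 Y).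
nra.
Qed.

End RealTaylor.

Local Open Scope complex_scope.

Section ComplexExp.
Context {R : realType}.
Local Notation C := R[i].

Lemma eeD (x y : C) : ee (x + y) = ee x * ee y.
Proof.
case: x => [p q]; case: y => [p' q']; rewrite /ee /=; simpc.
rewrite !mulrDr !opprD !expRD cosD sinD.
by apply/eqP; rewrite eq_complex /=; apply/andP; split; apply/eqP; ring.
Qed.

Lemma twopii_neq0 : twopii R != 0.
Proof.
apply: mulf_neq0; rewrite eq_complex /= negb_and.
  by rewrite gt_eqF // mulr_gt0 // pi_gt0.
by rewrite oner_neq0 orbT.
Qed.

Lemma norm_realC (t : R) : `|t%:C| = `|t|%:C.
Proof. by rewrite normc_def /= expr0n addr0 sqrtr_sqr. Qed.

Lemma normC_le_small_eq0 (x : C) (M d : R) : 0 < d ->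
  (forall t, 0 < t -> t < d -> `|x| <= (M * t)%:C) -> x = 0.
Proof.
move=> d0 small; apply/normr0_eq0; rewrite normc_def.
set n := Num.sqrt _; suff -> : n = 0 by [].
apply/eqP; rewrite eq_le sqrtr_ge0 andbT; apply/ler_addgt0Pr => e e0.
have M1 : 0 < `|M| + 1 by rewrite ltr_wpDl.
pose t := Num.min (d / 2) (e / (`|M| + 1)).
have t0 : 0 < t by rewrite lt_min !divr_gt0.
have td : t < d by rewrite gt_min ltr_pdivrMr ?ltr_pMr ?ltr1n.
have := small t t0 td; rewrite normc_def lecR -/n => /le_trans; apply.
rewrite add0r (le_trans (ler_wpM2r (ltW t0) (ler_norm M))) //.
apply: le_trans (_ : `|M| * (e / (`|M| + 1)) <= _).
  by rewrite ler_wpM2l // ge_min lexx orbT.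
by rewrite mulrCA ger_pMr // ler_pdivrMr // mul1r lerDl.
Qed.

Lemma norm_complex_le_add (u v : R) : `|u +i* v| <= (`|u| + `|v|)%:C.
Proof.
have -> : u +i* v = u%:C + v%:C * 'i by simpc.
apply: le_trans (ler_normD _ _) _.
by rewrite normrM !norm_realC normc_def /= expr0n expr1n add0r sqrtr1 mulr1 rmorphD.
Qed.

Lemma norm_le1_Re_Im (p q : R) : `|p +i* q| <= 1 -> `|p| <= 1 /\ `|q| <= 1.
Proof.
move=> w1; have : p ^+ 2 + q ^+ 2 <= 1.
  by rewrite -lecR (add_Re2_Im2 (p +i* q)) exprn_ile1.
have le1 (x : R) : x ^+ 2 <= 1 -> `|x| <= 1.
  by move=> x1; rewrite -(@ler_pXn2r _ 2) ?nnegrE // expr1n real_normK ?num_real.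
by have := sqr_ge0 p; have := sqr_ge0 q; split; apply: le1; lra.
Qed.

Lemma ee_sub1_quadratic : exists2 K : R, 0 <= K & forall w : C, `|w| <= 1 ->
  `|ee w - 1 - twopii R * w| <= K%:C * `|w| ^+ 2.
Proof.
have pi2_ge0 : 0 <= 2 * pi :> R by rewrite mulr_ge0 // pi_ge0.
have [K K0 HK] := expR_cos_sin_quadratic_bound _ pi2_ge0.
exists (K * (2 * pi) ^+ 2); first by rewrite mulr_ge0 // sqr_ge0.
move=> [p q] /norm_le1_Re_Im [p1 q1].
have -> : ee (p +i* q) - 1 - twopii R * (p +i* q) =
  (expR (- (2 * pi * q)) * cos (2 * pi * p) - 1 - (- (2 * pi * q))) +i*
  (expR (- (2 * pi * q)) * sin (2 * pi * p) - 2 * pi * p).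
  by rewrite /ee /twopii /=; simpc.
have XL : `|- (2 * pi * q)| <= 2 * pi by rewrite normrN normrM (ger0_norm pi2_ge0) ler_piMr.
have YL : `|2 * pi * p| <= 2 * pi by rewrite normrM (ger0_norm pi2_ge0) ler_piMr.
apply: le_trans (norm_complex_le_add _ _) _.
rewrite -(add_Re2_Im2 (p +i* q)) /= -rmorphM lecR.
have -> : K * (2 * pi) ^+ 2 * (p ^+ 2 + q ^+ 2) =
  K * ((- (2 * pi * q)) ^+ 2 + (2 * pi * p) ^+ 2) by ring.
exact: HK.
Qed.

End ComplexExp.

Section PuncturedBounds.
Context {R : realType}.
Local Notation C := R[i].

(* Norms on R[i] are R[i]-valued, so bounds are stated as `|x| <= M%:C` with a real M. *)
Definition bounded_punct (f : C -> C) : Prop :=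
  exists r : R, 0 < r /\ exists M : R,
    forall e : C, e != 0 -> `|e| < r%:C -> `|f e| <= M%:C.

Lemma normC_lt_min (e : C) (r1 r2 : R) :
  `|e| < (Num.min r1 r2)%:C -> `|e| < r1%:C /\ `|e| < r2%:C.
Proof. by move=> er; split; apply: lt_le_trans er _; rewrite lecR ge_min lexx ?orbT. Qed.

Lemma bounded_punct_nneg {f : C -> C} : bounded_punct f ->
  exists r : R, 0 < r /\ exists2 M : R, 0 <= M &
    forall e : C, e != 0 -> `|e| < r%:C -> `|f e| <= M%:C.
Proof.
move=> [r [r0 [M fM]]]; exists r; split => //; exists (Num.max M 0).
  by rewrite le_max lexx orbT.
by move=> e e0 er; apply: le_trans (fM e e0 er) _; rewrite lecR le_max lexx.
Qed.

Lemma bounded_punct_eq {f g : C -> C} :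
  (exists r : R, 0 < r /\ forall e, e != 0 -> `|e| < r%:C -> f e = g e) ->
  bounded_punct g -> bounded_punct f.
Proof.
move=> [r0 [r00 fg]] [r1 [r10 [M gM]]].
exists (Num.min r0 r1); split; first by rewrite lt_min r00 r10.
by exists M => e e0 /normC_lt_min [e_r0 e_r1]; rewrite fg //; apply: gM.
Qed.

Lemma bounded_punct_cst (c : C) : bounded_punct (fun _ => c).
Proof.
by exists 1; split => //; rewrite normc_def; eexists => e _ _.
Qed.

Lemma bounded_punct_id : bounded_punct id.
Proof. by exists 1; split => //; exists 1 => e _ /ltW. Qed.

Lemma bounded_punctD {f g : C -> C} :
  bounded_punct f -> bounded_punct g -> bounded_punct (fun e => f e + g e).
Proof.
move=> [r1 [r10 [M1 fM]]] [r2 [r20 [M2 gM]]].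
exists (Num.min r1 r2); split; first by rewrite lt_min r10 r20.
exists (M1 + M2) => e e0 /normC_lt_min [e_r1 e_r2].
by apply: le_trans (ler_normD _ _) _; rewrite rmorphD lerD ?fM ?gM.
Qed.

Lemma bounded_punctN {f : C -> C} : bounded_punct f -> bounded_punct (fun e => - f e).
Proof.
by move=> [r [r0 [M fM]]]; exists r; split => //; exists M => e e0 er; rewrite normrN fM.
Qed.

Lemma bounded_punctM {f g : C -> C} :
  bounded_punct f -> bounded_punct g -> bounded_punct (fun e => f e * g e).
Proof.
move=> /bounded_punct_nneg [r1 [r10 [M1 M10 fM]]] /bounded_punct_nneg [r2 [r20 [M2 M20 gM]]].
exists (Num.min r1 r2); split; first by rewrite lt_min r10 r20.
exists (M1 * M2) => e e0 /normC_lt_min [e_r1 e_r2].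
by rewrite normrM rmorphM ler_pM ?normr_ge0 ?fM ?gM.
Qed.

Ltac bounded_punct_auto := repeat first
  [ exact: bounded_punct_cst | exact: bounded_punct_id | assumption
  | apply: bounded_punctD | apply: bounded_punctN | apply: bounded_punctM ].

Lemma radius_scale {A : C} {r : R} : A != 0 -> 0 < r ->
  exists r' : R, 0 < r' /\ forall e : C, `|e| < r'%:C -> `|A * e| < r%:C.
Proof.
rewrite -normr_gt0 normc_def ltcR; set a := Num.sqrt _ => a0 r0.
exists (r / a); split; first exact: divr_gt0.
move=> e er; have -> : r = a * (r / a) by rewrite mulrCA divff ?mulr1 // gt_eqF.
by rewrite normrM normc_def -/a rmorphM ltr_pM2l // ltcR.
Qed.

Lemma bounded_punct_scale {A : C} {f : C -> C} :
  A != 0 -> bounded_punct f -> bounded_punct (fun e => f (A * e)).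
Proof.
move=> A0 [r [r0 [M fM]]]; have [r' [r'0 Ar]] := radius_scale A0 r0.
exists r'; split => //; exists M => e e0 er.
by apply: fM; [rewrite mulf_neq0 | exact: Ar].
Qed.

Lemma ee_expansion (p q : C) :
  bounded_punct (fun e => (ee (p * e + q * e ^+ 2) - 1 - twopii R * p * e) / e ^+ 2).
Proof.
have : bounded_punct (fun e => p + q * e) by bounded_punct_auto.
move=> /bounded_punct_nneg [r1 [r10 [M1 M10 pqM]]].
have [K K0 eeK] := @ee_sub1_quadratic R.
pose w e := p * e + q * e ^+ 2.
apply: (bounded_punct_eq (g := fun e => (ee (w e) - 1 - twopii R * w e) / e ^+ 2 + twopii R * q)).
  by exists 1; split => // e e0 _; rewrite /w; field; rewrite e0.
apply: bounded_punctD; last exact: bounded_punct_cst.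
have M1p : 0 < M1 + 1 by rewrite ltr_wpDl.
exists (Num.min r1 (M1 + 1)^-1); split; first by rewrite lt_min r10 invr_gt0.
exists (K * M1 ^+ 2) => e e0 /normC_lt_min [e_r1 e_small].
have we : `|w e| <= `|e| * M1%:C.
  have -> : w e = e * (p + q * e) by rewrite /w; ring.
  by rewrite normrM ler_wpM2l // pqM.
have w1 : `|w e| <= 1.
  apply: (le_trans we); apply: le_trans (_ : (M1 + 1)^-1%:C * M1%:C <= _).
    by rewrite ler_wpM2r ?ler0c // ltW.
  by rewrite -rmorphM lecR mulrC ler_pdivrMr // mul1r lerDl.
have e2 : 0 < `|e| ^+ 2 by rewrite exprn_gt0 // normr_gt0.
rewrite normf_div normrX ler_pdivrMr //; apply: (le_trans (eeK _ w1)).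
rewrite rmorphM rmorphXn -mulrA -exprMn ler_wpM2l ?ler0c // lerXn2r ?nnegrE //.
  have M1C : 0 <= M1%:C by rewrite ler0c.
  exact: mulr_ge0 M1C (normr_ge0 e).
by rewrite mulrC.
Qed.

Definition has_polar_part (f : C -> C) (P Q : C) : Prop :=
  bounded_punct (fun e => f e - P / e ^+ 2 - Q / e).

Lemma bounded_polar_eq0 (P Q : C) :
  bounded_punct (fun e => P / e ^+ 2 + Q / e) -> P = 0 /\ Q = 0.
Proof.
move=> /bounded_punct_nneg [r [r0 [M M0 HM]]].
pose d := Num.min r 1; have d0 : 0 < d by rewrite lt_min r0 ltr01.
have PQt t : 0 < t -> t < d -> `|P + Q * t%:C| <= (M * t ^+ 2)%:C.
  rewrite lt_min => t0 /andP[tr _].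
  have tC0 : t%:C != 0 by rewrite eq_complex negb_and gt_eqF.
  have normt : `|t%:C| = t%:C by rewrite norm_realC ger0_norm // ltW.
  have -> : P + Q * t%:C = t%:C ^+ 2 * (P / t%:C ^+ 2 + Q / t%:C) by field.
  have tC_ge0 : 0 <= t%:C by rewrite ler0c ltW.
  rewrite normrM normrX normt mulrC rmorphM rmorphXn ler_wpM2r ?exprn_ge0 //.
  by apply: HM => //; rewrite normt ltcR.
have [nQ normQ] : exists nQ : R, `|Q| = nQ%:C by rewrite normc_def; eexists.
have P0 : P = 0.
  apply: (normC_le_small_eq0 P (M + nQ) d d0) => t t0 td.
  have t1 : t <= 1 by apply/ltW/(lt_le_trans td); rewrite ge_min lexx orbT.
  rewrite -[P](addrK (Q * t%:C)); apply: (le_trans (ler_normB _ _)).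
  rewrite normrM normQ norm_realC (ger0_norm (ltW t0)).
  apply: le_trans (lerD (PQt t t0 td) (lexx _)) _.
  rewrite -rmorphM -rmorphD lecR mulrDl lerD2r expr2 mulrA.
  by rewrite ler_piMr // mulr_ge0 // ltW.
split => //; apply: (normC_le_small_eq0 Q M d d0) => t t0 td.
have := PQt t t0 td; rewrite P0 add0r normrM norm_realC (ger0_norm (ltW t0)).
by rewrite expr2 mulrA rmorphM ler_pM2r // ltcR.
Qed.

Lemma has_polar_part_uniq {f : C -> C} {P Q P' Q' : C} :
  has_polar_part f P Q -> has_polar_part f P' Q' -> P = P' /\ Q = Q'.
Proof.
move=> fPQ fPQ'.
have : bounded_punct (fun e => (P - P') / e ^+ 2 + (Q - Q') / e).
  apply: bounded_punct_eq (bounded_punctD fPQ' (bounded_punctN fPQ)).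
  by exists 1; split => // e e0 _; field.
by case/bounded_polar_eq0 => /eqP; rewrite subr_eq0 => /eqP -> /eqP; rewrite subr_eq0 => /eqP ->.
Qed.

Lemma has_polar_part_eq {f g : C -> C} {P Q P' Q' : C} :
  (exists r : R, 0 < r /\ forall e, e != 0 -> `|e| < r%:C -> f e = g e) ->
  P = P' -> Q = Q' -> has_polar_part g P' Q' -> has_polar_part f P Q.
Proof.
move=> [r [r0 fg]] -> ->; apply: bounded_punct_eq.
by exists r; split => // e e0 er; rewrite fg.
Qed.

Lemma has_polar_partZ (c : C) {f : C -> C} {P Q : C} :
  has_polar_part f P Q -> has_polar_part (fun e => c * f e) (c * P) (c * Q).
Proof.
move=> fPQ; apply: (bounded_punct_eq (g := fun e => c * (f e - P / e ^+ 2 - Q / e))).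
  by exists 1; split => // e _ _; ring.
by apply: bounded_punctM => //; apply: bounded_punct_cst.
Qed.

Lemma has_polar_part_scale {A : C} {f : C -> C} {P Q : C} : A != 0 ->
  has_polar_part f P Q -> has_polar_part (fun e => f (A * e)) (P / A ^+ 2) (Q / A).
Proof.
move=> A0 /(bounded_punct_scale A0); apply: bounded_punct_eq.
by exists 1; split => // e e0 _; rewrite exprMn; field; rewrite A0 e0.
Qed.

Lemma has_polar_partM {g h : C -> C} {p P Q : C} :
  bounded_punct (fun e => (g e - 1 - p * e) / e ^+ 2) -> has_polar_part h P Q ->
  has_polar_part (fun e => g e * h e) P (Q + p * P).
Proof.
move=> gq hPQ; pose q e := (g e - 1 - p * e) / e ^+ 2.
pose r e := h e - P / e ^+ 2 - Q / e.
apply: (bounded_punct_eq (g := fun e => r e + p * Q + p * e * r e + q e * (P + Q * e + e ^+ 2 * r e))).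
  by exists 1; split => // e e0 _; rewrite /q /r; field; rewrite e0.
by bounded_punct_auto.
Qed.

End PuncturedBounds.

Section Moebius.
Context {R : realType}.
Local Notation C := R[i].
Implicit Types (a b c d : int) (tau : C) (s : rat * rat).

Lemma intrC (n : int) : (n%:~R : C) = (n%:~R : R)%:C.
Proof. by rewrite rmorph_int. Qed.

Lemma automorphy_factor_neq0 {a b c d tau} : a * d - b * c = 1 -> upper tau ->
  c%:~R * tau + d%:~R != 0.
Proof.
case: tau => x y det; rewrite /upper /= => y0; rewrite !intrC; simpc.
rewrite eq_complex /= negb_and; apply/orP.
have [c0 | c0] := eqVneq c 0; last by right; rewrite mulf_neq0 ?intr_eq0 // gt_eqF.
left; rewrite c0 mul0r add0r intr_eq0; apply/eqP => d0.
by move: det; rewrite c0 d0 !mulr0 subr0.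
Qed.

Lemma moebius_upper {a b c d tau} : a * d - b * c = 1 -> upper tau ->
  upper (moebius a b c d tau).
Proof.
move=> det up; have := automorphy_factor_neq0 det up.
case: tau up => x y; rewrite /upper /moebius !intrC /= => y0; simpc.
set q := c%:~R * x + d%:~R; set p := a%:~R * x + b%:~R; set n := q ^+ 2 + _ => A0.
have n0 : 0 < n.
  by rewrite -ltcR (add_Re2_Im2 (q +i* (c%:~R * y))) exprn_gt0 // normr_gt0.
have -> : - (p * (c%:~R * y / n)) + a%:~R * y * (q / n) =
          y * (a%:~R * q - c%:~R * p) / n by rewrite /p /q; field; rewrite gt_eqF.
have -> : a%:~R * q - c%:~R * p = (a * d - b * c)%:~R :> R.
  by rewrite /q /p intrB !intrM; ring.
by rewrite det mulr1 divr_gt0.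
Qed.

Lemma zs_moebius s a b c d tau : c%:~R * tau + d%:~R != 0 ->
  zs s (moebius a b c d tau) = zs (sact s a b c d) tau / (c%:~R * tau + d%:~R).
Proof.
by move=> A0; rewrite /zs /moebius /sact /= !rmorphD !rmorphM !rmorph_int; field.
Qed.

Lemma sact_fst_automorphy s a b c d tau : a * d - b * c = 1 ->
  ratr (sact s a b c d).1 * (c%:~R * tau + d%:~R) - c%:~R * zs (sact s a b c d) tau
  = ratr s.1 :> C.
Proof.
move=> det; rewrite /zs /sact /= !rmorphD !rmorphM !rmorph_int.
have detC : (a%:~R * d%:~R - b%:~R * c%:~R : C) = 1 by rewrite -!intrM -intrB det.
by rewrite -[RHS]mulr1 -[in RHS]detC; ring.
Qed.

End Moebius.

Definition twisted_germ {R : realType} (m : nat) (phi : R[i] -> R[i] -> R[i])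
    (s : rat * rat) (tau eps : R[i]) : R[i] :=
  ee (m%:R * ratr s.1 * zs s tau) * phi tau (zs s tau + eps).

Section JacobiForm.
Context {R : realType} {G : level} {N : nat} {k : int} {m : nat}.
Context {S : set (rat * rat)} {phi : R[i] -> R[i] -> R[i]}.
Local Notation C := R[i].
Local Notation T := (twopii R).
Local Notation germ := (twisted_germ m phi).

Lemma laurent_ED_polar_part {s tau E D} : laurent_ED m phi s tau E D ->
  has_polar_part (germ s tau) (E / T ^+ 2) ((D - 2 * m%:R * ratr s.1 * E) / T).
Proof.
apply: bounded_punct_eq; exists 1; split => // e e0 _.
by rewrite /twisted_germ; field; rewrite e0 twopii_neq0.
Qed.

Hypothesis phiJ : meromorphic_jacobi_form G N k m S phi.

Lemma poles_punct_free tau z : upper tau ->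
  exists r : R, 0 < r /\ forall e, e != 0 -> `|e| < r%:C -> ~ poles S tau (z + e).
Proof.
case: phiJ => discrete _ up; have [r [r0 rS]] := discrete tau up z.
exists r; split => // e e0 er pole; have := rS _ pole.
rewrite addrC addrK -subr_eq0 addrK e0 => /(_ isT) re.
by have := lt_le_trans er re; rewrite ltxx.
Qed.

Lemma twisted_germ_moebius s {a b c d tau} : inGamma G N a b c d -> upper tau ->
  exists r : R, 0 < r /\ forall e, e != 0 -> `|e| < r%:C ->
    germ s (moebius a b c d tau) e =
    (c%:~R * tau + d%:~R) ^ k *
    (ee (2 * m%:R * c%:~R * zs (sact s a b c d) tau * e
         + m%:R * c%:~R * (c%:~R * tau + d%:~R) * e ^+ 2)
     * germ (sact s a b c d) tau ((c%:~R * tau + d%:~R) * e)).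
Proof.
move=> gam up; have [det _] := gam.
have A0 := automorphy_factor_neq0 det up; have up' := moebius_upper det up.
set A := c%:~R * tau + d%:~R in A0 *; set tau' := moebius a b c d tau in up' *.
set s' := sact s a b c d; set z' := zs s' tau.
have zsE : zs s tau' = z' / A by exact: zs_moebius.
have [ra [ra0 free]] := poles_punct_free tau z' up.
have [ra' [ra'0 Are]] := radius_scale A0 ra0.
have [rb [rb0 free']] := poles_punct_free tau' (zs s tau') up'.
exists (Num.min ra' rb); split; first by rewrite lt_min ra'0 rb0.
move=> e e0 /normC_lt_min [e_ra' e_rb].
have shiftE : (z' + A * e) / A = zs s tau' + e by rewrite zsE; field.
have [_ [_ [_ [modular_law _]]]] := phiJ.
have := modular_law a b c d gam tau (z' + A * e) up.
rewrite -/A -/tau' shiftE => modular.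
rewrite /twisted_germ -/tau' modular; last 2 first.
- by apply: free; rewrite ?mulf_neq0 ?Are.
- by apply: free'.
have phase : m%:R * ratr s.1 * zs s tau' + m%:R * c%:~R * (z' + A * e) ^+ 2 / A =
    2 * m%:R * c%:~R * z' * e + m%:R * c%:~R * A * e ^+ 2 + m%:R * ratr s'.1 * z'.
  by rewrite -(sact_fst_automorphy s a b c d tau det) -/s' -/z' -/A zsE; field.
rewrite -/z'; set P := phi tau _.
have eeE : ee (m%:R * ratr s.1 * zs s tau') * ee (m%:R * c%:~R * (z' + A * e) ^+ 2 / A)
    = ee (2 * m%:R * c%:~R * z' * e + m%:R * c%:~R * A * e ^+ 2) * ee (m%:R * ratr s'.1 * z').
  by rewrite -!eeD phase.
by rewrite mulrA mulrCA -eeE; ring.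
Qed.

Lemma twisted_germ_moebius_polar_part {a b c d s tau E' D'} :
  inGamma G N a b c d -> upper tau -> laurent_ED m phi (sact s a b c d) tau E' D' ->
  has_polar_part (germ s (moebius a b c d tau))
    ((c%:~R * tau + d%:~R) ^ (k - 2) * E' / T ^+ 2)
    (((c%:~R * tau + d%:~R) ^ (k - 1) * D'
      - 2 * m%:R * ratr s.1 * ((c%:~R * tau + d%:~R) ^ (k - 2) * E')) / T).
Proof.
move=> gam up ED; have [det _] := gam.
have A0 := automorphy_factor_neq0 det up; set A := c%:~R * tau + d%:~R in A0 *.
set s' := sact s a b c d; set z' := zs s' tau.
have := has_polar_partZ (A ^ k) (has_polar_partM
  (ee_expansion (2 * m%:R * c%:~R * z') (m%:R * c%:~R * A))
  (has_polar_part_scale A0 (laurent_ED_polar_part ED))).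
have Ak : A ^ k = A ^ (k - 2) * A ^+ 2 by rewrite -[A ^+ 2]/(A ^ 2%:Z) -expfzDr // subrK.
have Ak1 : A ^ (k - 1) = A ^ (k - 2) * A.
  by rewrite -[A in RHS]/(A ^ 1%:Z) -expfzDr //; congr (_ ^ _); ring.
have T0 : T != 0 := twopii_neq0.
move=> H; apply: has_polar_part_eq (twisted_germ_moebius s gam up) _ _ H.
  by rewrite Ak; field; rewrite A0 T0.
rewrite -(sact_fst_automorphy s a b c d tau det) -/A -/s' -/z' Ak1 Ak.
by field; rewrite A0 T0.
Qed.

End JacobiForm.

Theorem proposition3p5 (R : realType) (G : level) (N : nat) (k : int) (m : nat)
    (S : set (rat * rat)) (phi : R[i] -> R[i] -> R[i])
    (E D : rat * rat -> R[i] -> R[i]) :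
  (1 <= N)%N -> (0 < m)%N ->
  meromorphic_jacobi_form G N k m S phi ->
  (forall s tau, upper tau -> laurent_ED m phi s tau (E s tau) (D s tau)) ->
  forall a b c d, inGamma G N a b c d ->
  forall s, S s -> forall tau, upper tau ->
    E s (moebius a b c d tau) = (c%:~R * tau + d%:~R) ^ (k - 2) * E (sact s a b c d) tau /\
    D s (moebius a b c d tau) = (c%:~R * tau + d%:~R) ^ (k - 1) * D (sact s a b c d) tau.
Proof.
move=> _ _ phiJ ED a b c d gam s _ tau up.
have up' := moebius_upper gam.1 up.
have [eqE eqD] := has_polar_part_uniq (laurent_ED_polar_part (ED s _ up'))
  (twisted_germ_moebius_polar_part phiJ gam up (ED (sact s a b c d) tau up)).
have T0 := @twopii_neq0 R.
have eqE' : E s (moebius a b c d tau) = (c%:~R * tau + d%:~R) ^ (k - 2) * E (sact s a b c d) tau.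
  by apply: (mulIf (expf_neq0 2 (invr_neq0 T0))); rewrite exprVn.
split => //; move: eqD; rewrite eqE'.
by move=> /(mulIf (invr_neq0 T0)) /addIr.
Qed.
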